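(* Let $K$, $A$, $B$ be real $m\times m$ matrices with $K$ and $B$ anti-symmetric and $A$ symmetric. At a fixed interface point, let $\mathbf z^{+}(t),\mathbf z^{-}(t),\breve{\mathbf z}^{+}(t),\breve{\mathbf z}^{-}(t)\in\mathbb R^m$ be continuously differentiable functions of $t$ (the right and left traces at that interface of two time-dependent piecewise polynomial vector functions $\mathbf z_h,\breve{\mathbf z}_h$). Set $\{\mathbf z\}=\tfrac12(\mathbf z^++\mathbf z^-)$, $[\mathbf z]=\mathbf z^+-\mathbf z^-$ (similarly for $\breve{\mathbf z}$), $\{K\mathbf z\cdot\breve{\mathbf z}\}=\tfrac12(K\mathbf z^+\cdot\breve{\mathbf z}^++K\mathbf z^-\cdot\breve{\mathbf z}^-)$, and define the numerical fluxes $$\widehat{K\mathbf z}=K\{\mathbf z\}+A[\mathbf z]+B\,\tfrac{d}{dt}[\mathbf z],\qquad \widehat{K\breve{\mathbf z}}=K\{\breve{\mathbf z}\}+A[\breve{\mathbf z}]+B\,\tfrac{d}{dt}[\breve{\mathbf z}],$$ and $$\mathcal F(\mathbf z,\breve{\mathbf z})=\{K\mathbf z\cdot\breve{\mathbf z}\}-\widehat{K\mathbf z}\cdot\{\breve{\mathbf z}\}+\widehat{K\breve{\mathbf z}}\cdot\{\mathbf z\}.$$ Then $$K\mathbf z^-\cdot\breve{\mathbf z}^--\widehat{K\mathbf z}\cdot\breve{\mathbf z}^-+\widehat{K\breve{\mathbf z}}\cdot\mathbf z^-=\mathcal F(\mathbf z,\breve{\mathbf z})-\tfrac12\tfrac{d}{dt}\big(B[\breve{\mathbf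 z}]\cdot[\mathbf z]\big),$$ $$K\mathbf z^+\cdot\breve{\mathbf z}^+-\widehat{K\mathbf z}\cdot\breve{\mathbf z}^++\widehat{K\breve{\mathbf z}}\cdot\mathbf z^+=\mathcal F(\mathbf z,\breve{\mathbf z})+\tfrac12\tfrac{d}{dt}\big(B[\breve{\mathbf z}]\cdot[\mathbf z]\big).$$
   Context: $\cdot$ denotes the Euclidean inner product on $\mathbb R^m$. In the paper these identities are applied at each cell interface $x_{j+1/2}$ of a one-dimensional mesh, with $\mathbf z^\pm$ the right/left limits of discontinuous piecewise polynomial functions. *)

From HB Require Import structures.
From mathcomp Require Import all_boot all_order all_algebra.
From mathcomp Require Import all_classical all_reals all_analysis.
Set Implicit Arguments. Unset Strict Implicit. Unset Printing Implicit Defensive.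
Import Order.TTheory GRing.Theory Num.Theory.
Import numFieldNormedType.Exports.
Local Open Scope ring_scope.

Definition dotv {R : realType} {m : nat} (u v : 'cV[R]_m) : R :=
  \sum_(i < m) u i 0 * v i 0.

Definition avgv {R : realType} {m : nat} (zp zm : 'cV[R]_m) : 'cV[R]_m :=
  2^-1 *: (zp + zm).
Definition jumpv {R : realType} {m : nat} (zp zm : 'cV[R]_m) : 'cV[R]_m :=
  zp - zm.

Definition C1fun {R : realType} {m : nat} (f : R -> 'cV[R]_m) : Prop :=
  (forall t, derivable f t 1) /\ continuous (derive1 f).

Definition flux {R : realType} {m : nat} (K A B : 'M[R]_m)
  (zp zm : R -> 'cV[R]_m) (t : R) : 'cV[R]_m :=
  K *m avgv (zp t) (zm t) + A *m jumpv (zp t) (zm t)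
  + B *m derive1 (fun s => jumpv (zp s) (zm s)) t.

Definition avgdot {R : realType} {m : nat} (K : 'M[R]_m)
  (zp zm zbp zbm : 'cV[R]_m) : R :=
  2^-1 * (dotv (K *m zp) zbp + dotv (K *m zm) zbm).

Definition Fcal {R : realType} {m : nat} (K A B : 'M[R]_m)
  (zp zm zbp zbm : R -> 'cV[R]_m) (t : R) : R :=
  avgdot K (zp t) (zm t) (zbp t) (zbm t)
  - dotv (flux K A B zp zm t) (avgv (zbp t) (zbm t))
  + dotv (flux K A B zbp zbm t) (avgv (zp t) (zm t)).

From HB Require Import structures.
From mathcomp Require Import all_boot all_order all_algebra.
From mathcomp Require Import all_classical all_reals all_analysis.
From mathcomp Require Import lra.
Import Order.TTheory GRing.Theory Num.Theory.
Import numFieldNormedType.Exports.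
Local Open Scope ring_scope.

(* Expanding the traces as z^+- = {z} +- [z]/2, both identities reduce to one
   balance law for the fluxes F = K{z} + A[z] + B d[z]/dt and Fb (same for zb):
     F.[zb] - Fb.[z] = Kz^+.zb^+ - Kz^-.zb^- - d/dt (B[zb].[z]).
   The central parts K{z}, K{zb} produce the difference of the K-terms (by
   bilinearity and skew-symmetry of K), the A-terms cancel since A is symmetric,
   and skew-symmetry of B turns the remaining B-terms into the product-rule
   derivative of B[zb].[z]. *)


Section DotProduct.
Context {R : realType} {m : nat}.
Implicit Types (u v w : 'cV[R]_m) (M : 'M[R]_m).

Lemma dotvC u v : dotv u v = dotv v u.
Proof. by apply: eq_bigr => i _; rewrite mulrC. Qed.

Lemma dotvDl u v w : dotv (u + v) w = dotv u w + dotv v w.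
Proof. by rewrite /dotv -big_split; apply: eq_bigr => i _; rewrite mxE mulrDl. Qed.

Lemma dotvNl u v : dotv (- u) v = - dotv u v.
Proof. by rewrite /dotv -sumrN; apply: eq_bigr => i _; rewrite mxE mulNr. Qed.

Lemma dotvZl a u v : dotv (a *: u) v = a * dotv u v.
Proof. by rewrite /dotv mulr_sumr; apply: eq_bigr => i _; rewrite mxE mulrA. Qed.

Lemma dotvBl u v w : dotv (u - v) w = dotv u w - dotv v w.
Proof. by rewrite dotvDl dotvNl. Qed.

Lemma dotvDr u v w : dotv u (v + w) = dotv u v + dotv u w.
Proof. by rewrite dotvC dotvDl !(dotvC u). Qed.

Lemma dotvBr u v w : dotv u (v - w) = dotv u v - dotv u w.
Proof. by rewrite dotvC dotvBl !(dotvC u). Qed.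

Lemma dotvZr a u v : dotv u (a *: v) = a * dotv u v.
Proof. by rewrite dotvC dotvZl dotvC. Qed.

Lemma dotv_mulmx_trmx M u v : dotv (M *m u) v = dotv u (M^T *m v).
Proof.
rewrite /dotv; under eq_bigr do rewrite mxE big_distrl.
under [RHS]eq_bigr do rewrite mxE big_distrr.
rewrite exchange_big; apply: eq_bigr => i _; apply: eq_bigr => j _.
by rewrite mxE /= -mulrA mulrCA.
Qed.

Lemma dotv_mulmx_sym M u v : M^T = M -> dotv (M *m u) v = dotv (M *m v) u.
Proof. by move=> MT; rewrite dotv_mulmx_trmx MT dotvC. Qed.

Lemma dotv_mulmx_skew M u v : M^T = - M -> dotv (M *m u) v = - dotv (M *m v) u.
Proof. by move=> MT; rewrite dotv_mulmx_trmx MT mulNmx dotvC dotvNl. Qed.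

Lemma dotv_avg_addjump u p q :
  dotv u (avgv p q) + 2^-1 * dotv u (jumpv p q) = dotv u p.
Proof. by rewrite /avgv /jumpv dotvZr dotvDr dotvBr; lra. Qed.

Lemma dotv_avg_subjump u p q :
  dotv u (avgv p q) - 2^-1 * dotv u (jumpv p q) = dotv u q.
Proof. by rewrite /avgv /jumpv dotvZr dotvDr dotvBr; lra. Qed.

Lemma dotv_mulmx_jump M p q bp bq :
  dotv (M *m p) bp - dotv (M *m q) bq
  = dotv (M *m avgv p q) (jumpv bp bq) + dotv (M *m jumpv p q) (avgv bp bq).
Proof.
rewrite /avgv /jumpv -scalemxAr mulmxDr mulmxBr.
by rewrite dotvZl dotvZr !(dotvBl, dotvBr, dotvDl, dotvDr); lra.
Qed.

End DotProduct.

Section MatrixDerivative.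
Context {R : realType} {n p q : nat}.
Variables (M : 'M[R]_(n, p)) (f : R -> 'M[R]_(p, q)) (t : R).
Hypothesis df : derivable f t 1.

Let mulmx_entryE i j :
  (fun s => (M *m f s) i j) = \sum_(k < p) (fun s => M i k * f s k j).
Proof. by apply/funext => s; rewrite mxE fct_sumE. Qed.

Let derivable_entry k j : derivable (fun s => f s k j) t 1.
Proof. by move/derivable_mxP: df. Qed.

Lemma derivable_mulmx : derivable (fun s => M *m f s) t 1.
Proof.
apply/derivable_mxP => i j; rewrite mulmx_entryE.
by apply: derivable_sum => k; apply: derivableZ.
Qed.

Lemma derive1_mulmx : derive1 (fun s => M *m f s) t = M *m derive1 f t.
Proof.
rewrite !derive1E (derive_mx derivable_mulmx) (derive_mx df).
apply/matrixP => i j; rewrite !mxE mulmx_entryE derive_sum => [|k].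
  by apply: eq_bigr => k _; rewrite deriveZ // mxE.
exact: derivableZ.
Qed.

End MatrixDerivative.

Lemma derive1_dotv {R : realType} {m : nat} (f g : R -> 'cV[R]_m) t :
  derivable f t 1 -> derivable g t 1 ->
  derive1 (fun s => dotv (f s) (g s)) t
  = dotv (derive1 f t) (g t) + dotv (f t) (derive1 g t).
Proof.
move=> df dg; have dfi := (derivable_mxP _ _ _).1 df.
have dgi := (derivable_mxP _ _ _).1 dg.
have -> : (fun s => dotv (f s) (g s)) = \sum_(i < m) (fun s => f s i 0 * g s i 0).
  by apply/funext => s; rewrite fct_sumE.
rewrite derive1E derive_sum => [|i]; last exact: derivableM.
rewrite /dotv -big_split; apply: eq_bigr => i _.
rewrite deriveM // !derive1E (derive_mx df) (derive_mx dg) !mxE addrC.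
by congr (_ + _); apply: mulrC.
Qed.

Section NumericalFlux.
Context {R : realType} {m : nat}.
Variables (K A B : 'M[R]_m).
Hypotheses (hK : K^T = - K) (hA : A^T = A) (hB : B^T = - B).

Definition numflux (p q d : 'cV[R]_m) : 'cV[R]_m :=
  K *m avgv p q + A *m jumpv p q + B *m d.

Lemma fluxE (zp zm : R -> 'cV[R]_m) t :
  flux K A B zp zm t = numflux (zp t) (zm t) (derive1 (fun s => jumpv (zp s) (zm s)) t).
Proof. by []. Qed.

Variables (p q bp bq d bd : 'cV[R]_m).
Local Notation F := (numflux p q d).
Local Notation Fb := (numflux bp bq bd).
(* [d], [bd] stand for d[z]/dt, d[zb]/dt, so that [dBjump] is d/dt (B[zb].[z]). *)
Local Notation dBjump := (dotv (B *m bd) (jumpv p q) + dotv (B *m jumpv bp bq) d).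

Lemma numflux_jump_balance :
  dotv F (jumpv bp bq) - dotv Fb (jumpv p q)
  = dotv (K *m p) bp - dotv (K *m q) bq - dBjump.
Proof.
rewrite dotv_mulmx_jump /numflux !dotvDl.
rewrite (dotv_mulmx_skew _ (avgv bp bq) _ hK) (dotv_mulmx_sym _ (jumpv bp bq) _ hA).
rewrite (dotv_mulmx_skew _ d _ hB); lra.
Qed.

Lemma numflux_lower_trace :
  dotv (K *m q) bq - dotv F bq + dotv Fb q
  = avgdot K p q bp bq - dotv F (avgv bp bq) + dotv Fb (avgv p q) - 2^-1 * dBjump.
Proof.
have := numflux_jump_balance.
by rewrite -(dotv_avg_subjump F bp bq) -(dotv_avg_subjump Fb p q) /avgdot; lra.
Qed.

Lemma numflux_upper_trace :
  dotv (K *m p) bp - dotv F bp + dotv Fb p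
  = avgdot K p q bp bq - dotv F (avgv bp bq) + dotv Fb (avgv p q) + 2^-1 * dBjump.
Proof.
have := numflux_jump_balance.
by rewrite -(dotv_avg_addjump F bp bq) -(dotv_avg_addjump Fb p q) /avgdot; lra.
Qed.

End NumericalFlux.

Theorem lemma3p1 (R : realType) (m : nat) (K A B : 'M[R]_m)
  (hK : K^T = - K) (hA : A^T = A) (hB : B^T = - B)
  (zp zm zbp zbm : R -> 'cV[R]_m)
  (hzp : C1fun zp) (hzm : C1fun zm) (hzbp : C1fun zbp) (hzbm : C1fun zbm)
  (t : R) :
  let G := fun s => dotv (B *m jumpv (zbp s) (zbm s)) (jumpv (zp s) (zm s)) in
  dotv (K *m zm t) (zbm t) - dotv (flux K A B zp zm t) (zbm t)
    + dotv (flux K A B zbp zbm t) (zm t)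
  = Fcal K A B zp zm zbp zbm t - 2^-1 * derive1 G t
  /\
  dotv (K *m zp t) (zbp t) - dotv (flux K A B zp zm t) (zbp t)
    + dotv (flux K A B zbp zbm t) (zp t)
  = Fcal K A B zp zm zbp zbm t + 2^-1 * derive1 G t.
Proof.
move=> G.
have dJ : derivable (fun s => jumpv (zp s) (zm s)) t 1 := derivableB (hzp.1 t) (hzm.1 t).
have dJb : derivable (fun s => jumpv (zbp s) (zbm s)) t 1 :=
  derivableB (hzbp.1 t) (hzbm.1 t).
have dG := derive1_dotv _ _ t (derivable_mulmx B _ _ dJb) dJ.
rewrite derive1_mulmx // in dG.
rewrite /Fcal !fluxE [derive1 G t]dG.
by split; [apply: numflux_lower_trace | apply: numflux_upper_trace].
Qed.
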